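(* Let $k\ge2$, let $f:(k+1)^V\to\mathbb{R}_{\ge0}$ be non-negative, monotone and $k$-submodular with multilinear extension $F$, let $OPT=\max_{S\in(k+1)^V}f(S)$, and let $c>0$. Consider the meta-framework with step $\delta=1/N$, and suppose that at every iteration $t$ the direction $v(t)$ satisfies, with $y=\nabla F(s(t))$: for every $a\in\mathbb{R}^{n\times k}$ with $0\le a_{i,j}\le y_{i,j}$ for all $i,j$, and every map $j^*:[n]\to[k]$, $$\sum_{i\in[n]}\sum_{j\in[k]}v_{i,j}(t)\big(a_{i,j^*(i)}-a_{i,j}\big)\ \le\ c\sum_{i\in[n]}\sum_{j\in[k]}v_{i,j}(t)\,y_{i,j}.$$ Then for every $\varepsilon>0$ there is $N_0$ such that for all $N\ge N_0$ the output satisfies $F(s(N))\ge\frac{1}{c+1}OPT-\varepsilon$.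
   Context: Let $V=[n]=\{1,\dots,n\}$ and let $k\ge 1$ be an integer. Write $(k+1)^V$ for the set of $k$-tuples $S=(S_1,\dots,S_k)$ of pairwise disjoint subsets of $V$. For $S,T\in(k+1)^V$ let $S\sqcap T=(S_1\cap T_1,\dots,S_k\cap T_k)$ and let $S\sqcup T$ be the tuple whose $j$-th component is $(S_j\cup T_j)\setminus\bigcup_{l\neq j}(S_l\cup T_l)$. A function $f:(k+1)^V\to\mathbb{R}$ is $k$-submodular if $f(S)+f(T)\ge f(S\sqcap T)+f(S\sqcup T)$ for all $S,T\in(k+1)^V$. Write $S\preceq T$ if $S_j\subseteq T_j$ for all $j$; $f$ is monotone if $S\preceq T$ implies $f(S)\le f(T)$. Let $\mathcal P=\{x\in[0,1]^{n\times k}:\sum_{j=1}^k x_{i,j}\le 1\ \forall i\in[n]\}$. The multilinear extension of $f$ is the polynomial $F(x)=\sum_{S\in(k+1)^V} f(S_1,\dots,S_k)\Big(\prod_{j\in[k]}\prod_{i\in S_j}x_{i,j}\Big)\prod_{i\in V\setminus\bigcup_j S_j}\Big(1-\sum_{j=1}^k x_{i,j}\Big)$, considered on $\mathcal P$. Meta-framework: fix a positive integer $N$ and $\delta=1/N$. Set $s(0)=0\in\mathbb{R}^{n\times k}$. For $t=0,1,\dots,N-1$, choose a direction $v(t)\in[0,1]^{n\times k}$ with $\sum_{j=1}^k v_{i,j}(t)=1$ for every $i\in[n]$ (the choice may depend on $s(t)$ and on $F$), and set $s(t+1)=s(t)+\delta\,v(t)$. The output is $s(N)$. *)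

From HB Require Import structures.
From mathcomp Require Import all_boot all_order all_algebra.
From mathcomp Require Import all_classical all_reals.
From mathcomp Require Import topology normedtype derive.
Set Implicit Arguments. Unset Strict Implicit. Unset Printing Implicit Defensive.
Import Order.TTheory GRing.Theory Num.Theory numFieldNormedType.Exports.
Local Open Scope ring_scope.

(* Elements of (k+1)^V, V = [n], encoded as assignments
   S : 'I_n -> option 'I_k, where S i = Some j  <->  i \in S_j,
   and S i = None <-> i is in no S_j.  (Bijective with k-tuples of
   pairwise disjoint subsets of V.) *)
Definition kset (n k : nat) := {ffun 'I_n -> option 'I_k}.

Definition kcomp n k (S : kset n k) (j : 'I_k) : {set 'I_n} :=
  [set i | S i == Some j].

(* S ⊓ T : component j is S_j ∩ T_j *)
Definition kmeet n k (S T : kset n k) : kset n k :=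
  [ffun i => if S i == T i then S i else None].

(* S ⊔ T : component j is (S_j ∪ T_j) minus ⋃_{l<>j} (S_l ∪ T_l) *)
Definition kjoin n k (S T : kset n k) : kset n k :=
  [ffun i => match S i, T i with
             | None, t => t
             | s, None => s
             | Some a, Some b => if a == b then Some a else None
             end].

Definition ksubmodular (R : realType) n k (f : kset n k -> R) : Prop :=
  forall S T, f (kmeet S T) + f (kjoin S T) <= f S + f T.

Definition kle n k (S T : kset n k) : Prop :=
  forall j, kcomp S j \subset kcomp T j.

Definition kmonotone (R : realType) n k (f : kset n k -> R) : Prop :=
  forall S T, kle S T -> f S <= f T.

Definition multilinear_ext (R : realType) n k (f : kset n k -> R)
  (x : 'M[R]_(n, k)) : R :=
  \sum_(S : kset n k) f S *
    \prod_(i < n) (match S i with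
                   | Some j => x i j
                   | None => 1 - \sum_(j < k) x i j
                   end).

Definition partial (R : realType) n k (F : 'M[R]_(n, k) -> R)
  (x : 'M[R]_(n, k)) (i : 'I_n) (j : 'I_k) : R :=
  derive1 (fun t : R => F (x + t *: delta_mx i j)) 0.

Definition gradient (R : realType) n k (F : 'M[R]_(n, k) -> R)
  (x : 'M[R]_(n, k)) : 'M[R]_(n, k) :=
  \matrix_(i, j) partial F x i j.

(* OPT = max_S f(S)  (f is nonnegative, so 0 is a harmless default) *)
Definition OPT (R : realType) n k (f : kset n k -> R) : R :=
  \big[Num.max/0]_(S : kset n k) f S.

Definition traj (R : realType) n k (N : nat) (v : nat -> 'M[R]_(n, k))
  (t : nat) : 'M[R]_(n, k) :=
  \sum_(u < t) (N%:R)^-1 *: v u.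

Definition direction (R : realType) n k (w : 'M[R]_(n, k)) : Prop :=
  (forall i j, 0 <= w i j <= 1) /\ (forall i, \sum_(j < k) w i j = 1).

Definition good_direction (R : realType) n k (c : R)
  (y w : 'M[R]_(n, k)) : Prop :=
  forall (a : 'M[R]_(n, k)),
    (forall i j, 0 <= a i j <= y i j) ->
    forall (jstar : 'I_n -> 'I_k),
      \sum_(i < n) \sum_(j < k) w i j * (a i (jstar i) - a i j)
      <= c * \sum_(i < n) \sum_(j < k) w i j * y i j.

From HB Require Import structures.
From mathcomp Require Import all_boot all_order all_algebra.
From mathcomp Require Import all_classical all_reals.
From mathcomp Require Import topology normedtype derive.
From mathcomp Require Import ring lra.
Import Order.TTheory GRing.Theory Num.Theory numFieldNormedType.Exports.
Local Open Scope ring_scope.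

(* Since F is affine in
   each row, its partial derivatives have a closed form [pd], the expected
   marginal gain of putting i into the j-th component.
   - Monotonicity of f makes [pd] nonnegative; k-submodularity (through
     diminishing returns across two distinct elements) makes [pd]
     antitone in x on the polytope.
   - A second-order product estimate shows that one step x -> x + d w
     changes F by d <w, grad F(x)> up to K d^2, K depending only on f.
   - Let e be the 0/1 matrix of an optimal full assignment and
     y(t) = s(t) + (1 - t/N) e.  As s(t) <= y(t), grad F(y(t)) is an
     admissible vector a in the direction condition, which yields
     F(y t) - F(y (t+1)) <= c (F(s (t+1)) - F(s t)) + (c+1) K / N^2.
     Telescoping from y(0) = e to y(N) = s(N) gives
     OPT <= F(e) <= (c+1) F(s N) + (c+1) K / N, hence the theorem. *)

(* The first two bounds are
   needed to carry the induction. *)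
Lemma prod_perturb {R : realFieldType} {I : eqType} {rs : seq I} {a b : I -> R}
    {be : R} :
  uniq rs -> 0 <= be ->
  (forall i, `|a i| <= 1) -> (forall i, `|a i + b i| <= 1) ->
  (forall i, `|b i| <= be) ->
  [/\ `|\prod_(l <- rs) (a l + b l)| <= 1,
      `|\prod_(l <- rs) (a l + b l) - \prod_(l <- rs) a l| <= (size rs)%:R * be &
      `|\prod_(l <- rs) (a l + b l) - \prod_(l <- rs) a l
          - \sum_(i <- rs) b i * \prod_(l <- rs | l != i) a l|
        <= (size rs)%:R ^+ 2 * be ^+ 2].
Proof.
move=> + be0 ha hab hb; elim: rs => [|x rs IH] /=.
  by rewrite !big_nil; split; rewrite ?subrr ?normr0 ?normr1 // mulr_ge0 ?sqr_ge0.
move=> /andP [xNrs urs]; have [H1 H2 H3] := IH urs.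
have drop_x : \prod_(l <- x :: rs | l != x) a l = \prod_(l <- rs) a l.
  rewrite big_cons eqxx /= big_seq_cond [RHS]big_seq; apply: eq_bigl => l.
  by case lrs: (l \in rs) => //=; apply/eqP => lx; move: xNrs; rewrite -lx lrs.
have keep_x : \sum_(i <- rs) b i * \prod_(l <- x :: rs | l != i) a l =
              a x * \sum_(i <- rs) b i * \prod_(l <- rs | l != i) a l.
  rewrite mulr_sumr big_seq [RHS]big_seq; apply: eq_bigr => i irs.
  rewrite big_cons ifT; first by rewrite mulrCA.
  by apply/eqP => xi; move: xNrs; rewrite xi irs.
rewrite [\sum_(i <- x :: rs) _]big_cons drop_x keep_x !big_cons.
set P := \prod_(l <- rs) (a l + b l) in H1 H2 H3 *.
set A := \prod_(l <- rs) a l in H2 H3 *.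
set L := \sum_(i <- rs) b i * \prod_(l <- rs | l != i) a l in H3 *.
set m := (size rs)%:R in H2 H3.
have m0 : 0 <= m by rewrite /m ler0n.
rewrite -natr1 -/m.
have hax := ha x; have hbx := hb x; have habx := hab x.
have nP := normr_ge0 P; have nPA := normr_ge0 (P - A).
have nax := normr_ge0 (a x); have nbx := normr_ge0 (b x).
have nPAL := normr_ge0 (P - A - L).
have mbe0 : 0 <= m * be ^+ 2 by rewrite mulr_ge0 ?sqr_ge0.
split.
- by rewrite normrM; nra.
- rewrite (_ : _ - _ = a x * (P - A) + b x * P); last by ring.
  by apply: le_trans (ler_normD _ _) _; rewrite !normrM; nra.
- rewrite (_ : _ - _ - _ = a x * (P - A - L) + b x * (P - A)); last by ring.
  by apply: le_trans (ler_normD _ _) _; rewrite !normrM; nra.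
Qed.

Section MultilinearExtension.
Variables (R : realType) (n k : nat).
Implicit Types (S : kset n k) (i l r : 'I_n) (j m : 'I_k) (o : option 'I_k)
  (h : kset n k -> R) (q : 'I_n -> option 'I_k -> R) (x y w : 'M[R]_(n,k)).

Definition msum h q : R := \sum_S h S * \prod_(i < n) q i (S i).

Definition setrow q i (g : option 'I_k -> R) : 'I_n -> option 'I_k -> R :=
  fun r => if r == i then g else q r.

Definition roww x : 'I_n -> option 'I_k -> R := fun i o =>
  if o is Some j then x i j else 1 - \sum_(j < k) x i j.

(* Derivative of a row weight in the direction of the unit entry j. *)
Definition dirw j o : R := if o is Some j' then (j' == j)%:R else -1.

Definition upd S i o : kset n k := [ffun r => if r == i then o else S r].

Lemma multilinear_extE h x : multilinear_ext h x = msum h (roww x).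
Proof. by []. Qed.

Lemma msum_ext h q q' : (forall r o, q r o = q' r o) -> msum h q = msum h q'.
Proof.
by move=> qq'; apply: eq_bigr => S _; congr (_ * _); apply: eq_bigr => r _.
Qed.

Lemma msum_setrow h q i g : msum h (setrow q i g) =
  \sum_S h S * (g (S i) * \prod_(r | r != i) q r (S r)).
Proof.
apply: eq_bigr => S _; rewrite (bigD1 i) //= /setrow eqxx.
by congr (_ * (_ * _)); apply: eq_bigr => r /negbTE ->.
Qed.

Lemma msum_row_affine h q i (g0 : option 'I_k -> R) (c : 'I_k -> R)
    (g : 'I_k -> option 'I_k -> R) :
  msum h (setrow q i (fun o => g0 o + \sum_m c m * g m o)) =
  msum h (setrow q i g0) + \sum_m c m * msum h (setrow q i (g m)).
Proof.
rewrite !msum_setrow.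
under [X in _ = _ + X]eq_bigr => m _ do rewrite msum_setrow mulr_sumr.
rewrite [in RHS]exchange_big -big_split /=; apply: eq_bigr => S _.
rewrite mulrDl mulrDr mulr_suml mulr_sumr; congr (_ + _).
by apply: eq_bigr => m _; ring.
Qed.

Lemma msum_setrow_id h q i : msum h (setrow q i (q i)) = msum h q.
Proof. by apply: msum_ext => r o; rewrite /setrow; case: eqP => // ->. Qed.

Lemma upd_same S i o : upd S i o i = o.
Proof. by rewrite ffunE eqxx. Qed.

Lemma upd_other S i o r : r != i -> upd S i o r = S r.
Proof. by rewrite ffunE => /negbTE ->. Qed.

Lemma upd_id S i : upd S i (S i) = S.
Proof. by apply/ffunP => r; rewrite ffunE; case: eqP => // ->. Qed.

Lemma upd_upd S i o o' : upd (upd S i o) i o' = upd S i o'.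
Proof. by apply/ffunP => r; rewrite !ffunE; case: eqP. Qed.

Definition swap_opt o (a : option 'I_k) : option 'I_k :=
  if a == None then o else if a == o then None else a.

Lemma swap_optK o : involutive (swap_opt o).
Proof.
move=> a; rewrite /swap_opt.
case: (eqVneq a None) => [->|aN].
  by case: (eqVneq o None) => [->|oN]; rewrite ?eqxx // (negbTE oN) eqxx.
case: (eqVneq a o) => [->|ao]; first by rewrite eqxx.
by rewrite (negbTE aN) (negbTE ao).
Qed.

Lemma swap_opt_eq o a : (swap_opt o a == o) = (a == None).
Proof.
rewrite /swap_opt; case: (eqVneq a None) => [_|aN]; first by rewrite /= eqxx.
case: (eqVneq a o) => [ao|ao]; last by rewrite /= (negbTE ao).
by subst o; rewrite /= eq_sym (negbTE aN).
Qed.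

Lemma swap_at_inj i o : injective (fun S => upd S i (swap_opt o (S i))).
Proof.
by apply: (can_inj (g := fun S => upd S i (swap_opt o (S i)))) => S;
  rewrite upd_same upd_upd swap_optK upd_id.
Qed.

Lemma sum_by_value i (g : kset n k -> R) :
  \sum_S g S = \sum_(S : kset n k | S i == None) \sum_o g (upd S i o).
Proof.
rewrite exchange_big /= (partition_big (fun S : kset n k => S i) xpredT) //=.
apply: eq_bigr => o _; rewrite (reindex_inj (swap_at_inj i o)) /=.
by apply: eq_big => S; rewrite upd_same ?swap_opt_eq // => /eqP ->.
Qed.

Lemma sum_dirw j (X : option 'I_k -> R) :
  \sum_o X o * dirw j o = X (Some j) - X None.
Proof.
rewrite (bigD1 None) // (bigD1 (Some j)) //= big1 => [|[j'|] //= ne].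
  by rewrite eqxx mulr1 addr0 mulrN1 addrC.
suff /negbTE -> : j' != j by rewrite mulr0.
by apply: contra ne => /eqP ->.
Qed.

Lemma msum_dirw h q i j : msum h (setrow q i (dirw j)) =
  \sum_(S : kset n k | S i == None)
    (h (upd S i (Some j)) - h S) * \prod_(r | r != i) q r (S r).
Proof.
rewrite msum_setrow (sum_by_value i); apply: eq_bigr => S /eqP Si.
transitivity (\sum_o h (upd S i o) * dirw j o * \prod_(r | r != i) q r (S r)).
  apply: eq_bigr => o _; rewrite upd_same -mulrA; congr (_ * (_ * _)).
  by apply: eq_bigr => r ri; rewrite upd_other.
by rewrite -mulr_suml sum_dirw; congr ((_ - h _) * _); rewrite -Si upd_id.
Qed.

Lemma upd_kle S i j : S i = None -> kle S (upd S i (Some j)).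
Proof.
move=> Si j'; apply/fintype.subsetP => r; rewrite !inE ffunE.
by case: (eqVneq r i) => [->|//]; rewrite Si.
Qed.

Lemma msum_dirw_ge0 h q i j : kmonotone h ->
  (forall r o, r != i -> 0 <= q r o) -> 0 <= msum h (setrow q i (dirw j)).
Proof.
move=> hmono q0; rewrite msum_dirw; apply: sumr_ge0 => S /eqP Si.
rewrite mulr_ge0 ?prodr_ge0 // ?subr_ge0; first exact/hmono/upd_kle.
by move=> r; apply: q0.
Qed.

Lemma submod_cross h S i l j m : ksubmodular h -> i != l ->
  S i = None -> S l = None ->
  h (upd (upd S i (Some j)) l (Some m)) - h (upd S i (Some j))
   <= h (upd S l (Some m)) - h S.
Proof.
move=> hsub il Si Sl; have := hsub (upd S i (Some j)) (upd S l (Some m)).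
have -> : kmeet (upd S i (Some j)) (upd S l (Some m)) = S.
  apply/ffunP => r; rewrite !ffunE.
  have [->|ri] := eqVneq r i; first by rewrite (negbTE il) Si.
  by have [->|rl] := eqVneq r l; rewrite ?Sl ?eqxx.
have -> : kjoin (upd S i (Some j)) (upd S l (Some m)) =
          upd (upd S i (Some j)) l (Some m).
  apply/ffunP => r; rewrite !ffunE.
  have [->|ri] := eqVneq r i; first by rewrite (negbTE il) Si.
  have [->|rl] := eqVneq r l; first by rewrite Sl.
  by case: (S r) => // a; rewrite eqxx.
by move=> ?; lra.
Qed.

Lemma msum_dirw2_le0 h q i l j m : ksubmodular h -> i != l ->
  (forall r o, r != i -> r != l -> 0 <= q r o) ->
  msum h (setrow (setrow q i (dirw j)) l (dirw m)) <= 0.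
Proof.
move=> hsub il q0; rewrite msum_dirw.
pose gain S := if S l == None then h (upd S l (Some m)) - h S else 0.
pose q1 := setrow q l (fun=> 1).
have li : l != i by rewrite eq_sym.
have -> : \sum_(S : kset n k | S l == None) (h (upd S l (Some m)) - h S) *
     \prod_(r | r != l) setrow q i (dirw j) r (S r) =
     msum gain (setrow q1 i (dirw j)).
  rewrite big_mkcond; apply: eq_bigr => S _; rewrite [in RHS](bigD1 l) //=.
  rewrite /gain {2}/setrow (negbTE li) /q1 /setrow eqxx mul1r.
  case: ifP => _; last by rewrite mul0r.
  by congr (_ * _); apply: eq_bigr => r /negbTE ->.
rewrite msum_dirw; apply: sumr_le0 => S /eqP Si.
rewrite mulr_le0_ge0 //; last first.
  by apply: prodr_ge0 => r ri; rewrite /q1 /setrow; case: ifP => // /negbT; apply: q0.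
rewrite /gain upd_other 1?eq_sym //.
have [Sl|] := eqVneq (S l) None; last by rewrite subrr.
by rewrite subr_le0 submod_cross.
Qed.

Definition pd h x i j : R := msum h (setrow (roww x) i (dirw j)).

Lemma roww_row_eq x x' r o : (forall j, x' r j = x r j) -> roww x' r o = roww x r o.
Proof.
move=> same; case: o => [j|] /=; rewrite ?same //.
by congr (_ - _); apply: eq_bigr => j _; rewrite same.
Qed.

Lemma roww_shift x x' l o :
  roww x' l o = roww x l o + \sum_m (x' l m - x l m) * dirw m o.
Proof.
case: o => [j|] /=.
  rewrite (bigD1 j) //= eqxx mulr1 big1 ?addr0; first by ring.
  by move=> m mj; rewrite eq_sym (negbTE mj) mulr0.
under [X in _ = _ + X]eq_bigr do rewrite mulrN1.
by rewrite sumrN sumrB; ring.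
Qed.

Lemma msum_change_row h x x' l : (forall r j, r != l -> x' r j = x r j) ->
  msum h (roww x') = msum h (roww x) + \sum_m (x' l m - x l m) * pd h x l m.
Proof.
move=> same; rewrite -[msum h (roww x)](msum_setrow_id h _ l) -msum_row_affine.
apply: msum_ext => r o; rewrite /setrow; have [->|rl] := eqVneq r l.
  exact: roww_shift.
by apply: roww_row_eq => j; apply: same.
Qed.

Lemma partial_pd h x i j : partial (multilinear_ext h) x i j = pd h x i j.
Proof.
have line : (fun t : R => multilinear_ext h (x + t *: delta_mx i j)) =
            (fun t => msum h (roww x) + t * pd h x i j).
  apply: funext => t; rewrite multilinear_extE (msum_change_row h x _ i).
    congr (_ + _); rewrite (bigD1 j) //= big1 ?addr0.
      by rewrite !mxE !eqxx mulr1 addrC addrK.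
    by move=> m mj; rewrite !mxE eqxx (negbTE mj) mulr0 addr0 subrr mul0r.
  by move=> r j' ri; rewrite !mxE (negbTE ri) mulr0 addr0.
rewrite /partial line derive1E; apply: derive_val; apply: is_derive_eq.
by rewrite scale0r !add0r /GRing.scale /= mulr1.
Qed.

Definition in_polytope x := (forall i j, 0 <= x i j) /\ (forall i, \sum_j x i j <= 1).

Lemma roww_bounds x i o : in_polytope x -> 0 <= roww x i o <= 1.
Proof.
move=> [x0 x1]; case: o => [j|] /=.
  rewrite x0 /=; apply: le_trans (x1 i).
  by rewrite (bigD1 j) //= lerDl sumr_ge0.
by rewrite subr_ge0 x1 lerBlDr lerDl sumr_ge0.
Qed.

Lemma roww_ge0 x i o : in_polytope x -> 0 <= roww x i o.
Proof. by move=> xP; case/andP: (roww_bounds x i o xP). Qed.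

Lemma msum_ge0 h x : (forall S, 0 <= h S) -> in_polytope x -> 0 <= msum h (roww x).
Proof.
move=> h0 xP; apply: sumr_ge0 => S _.
by rewrite mulr_ge0 ?prodr_ge0 // => i _; apply: roww_ge0.
Qed.

Lemma pd_ge0 h x i j : kmonotone h -> in_polytope x -> 0 <= pd h x i j.
Proof. by move=> hmono xP; apply: msum_dirw_ge0 => // r o _; apply: roww_ge0. Qed.

Lemma pd_antitone_row h x x' l i j : ksubmodular h -> in_polytope x ->
  (forall r j, r != l -> x' r j = x r j) -> (forall j, x l j <= x' l j) ->
  pd h x' i j <= pd h x i j.
Proof.
move=> hsub xP same up.
have rowsE r o : r != l -> roww x' r o = roww x r o.
  by move=> rl; apply: roww_row_eq => j'; apply: same.
have [<-|li] := eqVneq l i.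
  rewrite /pd (msum_ext h _ (setrow (roww x) l (dirw j))) // => r o.
  by rewrite /setrow; case: eqP => // /eqP rl; rewrite rowsE.
have -> : pd h x' i j = msum h (setrow (setrow (roww x) i (dirw j)) l
         (fun o => setrow (roww x) i (dirw j) l o +
                   \sum_m (x' l m - x l m) * dirw m o)).
  apply: msum_ext => r o; rewrite /setrow.
  have [->|rl] := eqVneq r l; first by rewrite (negbTE li) (roww_shift x).
  by case: eqP => // _; rewrite rowsE.
rewrite msum_row_affine msum_setrow_id.
rewrite -[X in _ <= X]addr0 lerD2l; apply: sumr_le0 => m _.
rewrite mulr_ge0_le0 ?subr_ge0 //; apply: msum_dirw2_le0 => //; first by rewrite eq_sym.
by move=> r o _ _; apply: roww_ge0.
Qed.

Definition hybrid x x' (p : nat) : 'M[R]_(n,k) :=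
  \matrix_(r, j) if (r < p)%N then x' r j else x r j.

(* The gradient of F is antitone on the polytope, by changing one row at
   a time. *)
Lemma pd_antitone h x x' i j : ksubmodular h -> in_polytope x -> in_polytope x' ->
  (forall r j, x r j <= x' r j) -> pd h x' i j <= pd h x i j.
Proof.
move=> hsub xP x'P le_xx'.
have hybP p : in_polytope (hybrid x x' p).
  split=> [r j'|r]; first by rewrite mxE; case: ifP => _; [case: x'P | case: xP].
  by under eq_bigr do rewrite mxE; case: (r < p)%N; [case: x'P | case: xP].
suff hyb_le p : (p <= n)%N -> pd h (hybrid x x' p) i j <= pd h x i j.
  have -> : x' = hybrid x x' n by apply/matrixP => r j'; rewrite mxE ltn_ord.
  exact: hyb_le.
elim: p => [_|p IH lt_pn].
  by rewrite (_ : hybrid x x' 0 = x) //; apply/matrixP => r j'; rewrite mxE.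
apply: le_trans (IH (ltnW lt_pn)).
apply: (pd_antitone_row h _ _ (Ordinal lt_pn)) => // [r j' rp|j'].
  rewrite !mxE ltnS leq_eqVlt; congr (if _ then _ else _).
  by rewrite orb_idl // => /eqP rp'; case/eqP: rp; apply: val_inj.
by rewrite !mxE /= ltnSn ltnn.
Qed.

Definition taylor_const h : R := \sum_S `|h S| * (n * k)%:R ^+ 2.

Lemma pairing_pd h x w : \sum_i \sum_j w i j * pd h x i j =
  \sum_S h S * \sum_i (\sum_j w i j * dirw j (S i)) *
                       \prod_(l | l != i) roww x l (S l).
Proof.
under eq_bigr => i _ do under eq_bigr => j _ do rewrite /pd msum_setrow mulr_sumr.
under eq_bigr => i _ do rewrite exchange_big.
rewrite exchange_big; apply: eq_bigr => S _; rewrite mulr_sumr.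
by apply: eq_bigr => i _; rewrite mulr_suml mulr_sumr; apply: eq_bigr => j _; ring.
Qed.

Lemma dirw_norm j o : `|dirw j o| <= 1.
Proof.
by case: o => [j'|] /=; [case: (j' == j); rewrite ?normr1 ?normr0 | rewrite normrN normr1].
Qed.

Lemma taylor_step h x w (d : R) : 0 <= d -> in_polytope x ->
  in_polytope (x + d *: w) -> (forall i j, `|w i j| <= 1) ->
  `|multilinear_ext h (x + d *: w) - multilinear_ext h x
     - d * \sum_i \sum_j w i j * pd h x i j| <= taylor_const h * d ^+ 2.
Proof.
move=> d0 xP xwP w1; rewrite !multilinear_extE pairing_pd mulr_sumr /msum -!sumrB.
apply: le_trans (ler_norm_sum _ _ _) _.
rewrite /taylor_const mulr_suml; apply: ler_sum => S _.
pose a l := roww x l (S l).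
pose b l := d * \sum_j w l j * dirw j (S l).
have ab l : roww (x + d *: w) l (S l) = a l + b l.
  rewrite (roww_shift x) /b mulr_sumr; congr (_ + _).
  by apply: eq_bigr => j _; rewrite !mxE; ring.
have lin : d * (h S * \sum_i (\sum_j w i j * dirw j (S i)) *
             \prod_(l | l != i) roww x l (S l))
           = h S * \sum_i b i * \prod_(l | l != i) a l.
  by rewrite mulrCA; congr (_ * _); rewrite mulr_sumr; apply: eq_bigr => i _; rewrite mulrA.
rewrite (eq_bigr _ (fun l _ => ab l)) lin -!mulrBr normrM -mulrA ler_wpM2l //.
have a1 l : `|a l| <= 1 by have /andP[? ?] := roww_bounds x l (S l) xP; rewrite ger0_norm.
have ab1 l : `|a l + b l| <= 1.
  by rewrite -ab; have /andP[? ?] := roww_bounds (x + d *: w) l (S l) xwP; rewrite ger0_norm.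
have b1 l : `|b l| <= d * k%:R.
  rewrite /b normrM ger0_norm // ler_wpM2l //.
  apply: le_trans (ler_norm_sum _ _ _) _.
  rewrite -[k in k%:R]card_ord -sumr_const; apply: ler_sum => j _.
  by rewrite normrM -[1]mulr1 ler_pM ?dirw_norm.
have [_ _] := prod_perturb (index_enum_uniq 'I_n) (mulr_ge0 d0 (ler0n R k)) a1 ab1 b1.
rewrite (_ : size _ = n); last by rewrite -[RHS]card_ord cardE enumT.
by rewrite natrM (_ : _ * _ ^+ 2 = n%:R ^+ 2 * (d * k%:R) ^+ 2) //; ring.
Qed.

Lemma traj_succ N (v : nat -> 'M[R]_(n,k)) t :
  traj N v t.+1 = traj N v t + N%:R^-1 *: v t.
Proof. by rewrite /traj big_ord_recr. Qed.

Lemma traj_in_polytope N (v : nat -> 'M[R]_(n,k)) t : (0 < N)%N -> (t <= N)%N ->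
  (forall u, (u < N)%N -> direction (v u)) ->
  in_polytope (traj N v t) /\ (forall i, \sum_j traj N v t i j = t%:R / N%:R).
Proof.
move=> N0 tN vdir.
have entry i j : traj N v t i j = \sum_(u < t) N%:R^-1 * v u i j.
  by rewrite /traj summxE; apply: eq_bigr => u _; rewrite mxE.
have dir_u (u : 'I_t) : direction (v u) by apply/vdir/(leq_trans (ltn_ord u)).
have rows i : \sum_j traj N v t i j = t%:R / N%:R.
  under eq_bigr do rewrite entry.
  rewrite exchange_big /= (eq_bigr (fun=> N%:R^-1)) => [|u _].
    by rewrite sumr_const card_ord mulr_natl.
  by rewrite -mulr_sumr (proj2 (dir_u u) i) mulr1.
split=> //; split=> [i j|i].
  rewrite entry; apply: sumr_ge0 => u _.
  by rewrite mulr_ge0 ?invr_ge0 //; case/andP: (proj1 (dir_u u) i j).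
by rewrite rows ler_pdivrMr ?ltr0n // mul1r ler_nat.
Qed.

Definition indicator (J : 'I_n -> 'I_k) : 'M[R]_(n,k) := \matrix_(i, j) (j == J i)%:R.

Lemma indicator_row J i : \sum_j indicator J i j = 1.
Proof.
rewrite (bigD1 (J i)) //= big1 ?mxE ?eqxx ?addr0 // => j /negbTE jJ.
by rewrite mxE jJ.
Qed.

Lemma indicator_pairing J (D : 'I_k -> R) i :
  \sum_j indicator J i j * D j = D (J i).
Proof.
rewrite (bigD1 (J i)) //= big1 ?mxE ?eqxx ?mul1r ?addr0 // => j /negbTE jJ.
by rewrite mxE jJ mul0r.
Qed.

Lemma multilinear_ext_indicator h J :
  multilinear_ext h (indicator J) = h [ffun i => Some (J i)].
Proof.
have rowJ i o : roww (indicator J) i o = (o == Some (J i))%:R.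
  by case: o => [j|] /=; rewrite ?mxE // indicator_row subrr.
rewrite multilinear_extE /msum (bigD1 [ffun i => Some (J i)]) //=.
rewrite [X in _ + X]big1 ?addr0 => [|S SJ].
  by rewrite big1 ?mulr1 // => i _; rewrite rowJ ffunE eqxx.
have /existsP [i Si] : [exists i, S i != Some (J i)].
  rewrite -negb_forall; apply: contra SJ => /forallP SJ.
  by apply/eqP/ffunP => i; rewrite ffunE; apply/eqP.
by rewrite (bigD1 i) //= rowJ (negbTE Si) mul0r mulr0.
Qed.

Lemma progress_step h (c d : R) x y w (J : 'I_n -> 'I_k) :
  kmonotone h -> ksubmodular h -> 0 <= c -> 0 <= d ->
  direction w -> good_direction c (gradient (multilinear_ext h) x) w ->
  in_polytope x -> in_polytope (x + d *: w) ->
  in_polytope y -> in_polytope (y + d *: (w - indicator J)) ->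
  (forall i j, x i j <= y i j) ->
  multilinear_ext h y - multilinear_ext h (y + d *: (w - indicator J))
    <= c * (multilinear_ext h (x + d *: w) - multilinear_ext h x)
       + (c + 1) * (taylor_const h * d ^+ 2).
Proof.
move=> hmono hsub c0 d0 [w01 wrow] wgood xP xwP yP ywP le_xy.
pose D := pd h y; pose g := \sum_i \sum_j w i j * pd h x i j.
have gradE i j : gradient (multilinear_ext h) x i j = pd h x i j.
  by rewrite mxE partial_pd.
have /ler_normlP [x_lo _] : `|multilinear_ext h (x + d *: w) - multilinear_ext h x
    - d * g| <= taylor_const h * d ^+ 2.
  by apply: taylor_step => // i j; have /andP[? ?] := w01 i j; rewrite ger0_norm.
have /ler_normlP [y_lo _] : `|multilinear_ext h (y + d *: (w - indicator J))
    - multilinear_ext h y - d * \sum_i \sum_j (w - indicator J) i j * D i j|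
    <= taylor_const h * d ^+ 2.
  apply: taylor_step => // i j; rewrite !mxE ler_norml.
  by have /andP[? ?] := w01 i j; case: (j == J i) => /=; apply/andP; split; lra.
have a_ok i j : 0 <= (\matrix_(i, j) D i j : 'M[R]_(n,k)) i j
                  <= gradient (multilinear_ext h) x i j.
  by rewrite !mxE partial_pd pd_ge0 //= (pd_antitone h x y i j hsub xP yP le_xy).
have good : \sum_i \sum_j w i j * (D i (J i) - D i j) <= c * g.
  have := wgood _ a_ok J; under eq_bigr do under eq_bigr do rewrite !mxE.
  by under [X in _ <= c * X]eq_bigr do under eq_bigr do rewrite gradE.
have loss : \sum_i \sum_j (w - indicator J) i j * D i j =
            - \sum_i \sum_j w i j * (D i (J i) - D i j).
  rewrite -sumrN; apply: eq_bigr => i _.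
  under eq_bigr do rewrite mxE [(- indicator J) _ _]mxE mulrBl.
  under [in RHS]eq_bigr do rewrite mulrBr.
  by rewrite !sumrB indicator_pairing -mulr_suml wrow mul1r opprB.
have d_good : d * \sum_i \sum_j w i j * (D i (J i) - D i j) <= c * (d * g).
  by rewrite mulrCA ler_wpM2l.
have c_gain : c * (d * g) <= c * (multilinear_ext h (x + d *: w)
    - multilinear_ext h x) + c * (taylor_const h * d ^+ 2).
  by rewrite -mulrDr ler_wpM2l //; lra.
move: y_lo; rewrite loss mulrN mulrDl mul1r; lra.
Qed.

Lemma shift_in_polytope x (J : 'I_n -> 'I_k) (r : R) :
  in_polytope x -> (forall i, \sum_j x i j = r) -> r <= 1 ->
  in_polytope (x + (1 - r) *: indicator J).
Proof.
move=> [x0 _] xrow r1; split=> [i j|i].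
  by rewrite !mxE addr_ge0 ?mulr_ge0 ?subr_ge0 //; case: (j == J i).
rewrite (eq_bigr (fun j => x i j + (1 - r) * indicator J i j)) => [|j _].
  by rewrite big_split /= -mulr_sumr indicator_row xrow mulr1 addrC subrK.
by rewrite !mxE.
Qed.

(* The potential argument: with y(t) = s(t) + (1 - t/N) e, the loss
   F(e) - F(y t) is paid for by c times the gain of F along s, so that
   F(e) <= (c+1) F(s N) + (c+1) K / N. *)
Lemma comparison_bound h (c : R) N (v : nat -> 'M[R]_(n,k)) (J : 'I_n -> 'I_k) :
  kmonotone h -> ksubmodular h -> (forall S, 0 <= h S) -> 0 <= c -> (0 < N)%N ->
  (forall t, (t < N)%N -> direction (v t) /\
     good_direction c (gradient (multilinear_ext h) (traj N v t)) (v t)) ->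
  multilinear_ext h (indicator J) <=
    (c + 1) * multilinear_ext h (traj N v N) + (c + 1) * (taylor_const h / N%:R).
Proof.
move=> hmono hsub h0 c0 N0 vgood.
have vdir u : (u < N)%N -> direction (v u) by move=> /vgood [].
set d := N%:R^-1; have d0 : 0 <= d by rewrite invr_ge0.
pose F := multilinear_ext h; pose s t := traj N v t.
pose y t := s t + (1 - t%:R * d) *: indicator J.
have sP t : (t <= N)%N -> in_polytope (s t).
  by move=> tN; case: (traj_in_polytope N v t N0 tN vdir).
have tN1 t : (t <= N)%N -> t%:R * d <= 1.
  by move=> tN; rewrite ler_pdivrMr ?ltr0n // mul1r ler_nat.
have yP t : (t <= N)%N -> in_polytope (y t).
  move=> tN; have [sPt srow] := traj_in_polytope N v t N0 tN vdir.
  exact: shift_in_polytope sPt srow (tN1 t tN).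
have le_sy t i j : (t <= N)%N -> s t i j <= y t i j.
  by move=> tN; rewrite !mxE lerDl mulr_ge0 ?subr_ge0 ?tN1.
have ySe t : y t.+1 = y t + d *: (v t - indicator J).
  rewrite /y /s traj_succ -/d -natr1; apply/matrixP => i j; rewrite !mxE; ring.
have potential t : (t <= N)%N ->
    F (indicator J) - F (y t) <= c * (F (s t) - F (s 0)) +
                                 (c + 1) * (t%:R * (taylor_const h * d ^+ 2)).
  elim: t => [_|t IH lt_tN].
    by rewrite /y mul0r subr0 scale1r /s /traj big_ord0 add0r !subrr !(mulr0, mul0r) addr0.
  have tN := ltnW lt_tN; have [vtdir vtgood] := vgood t lt_tN.
  have sSe : s t.+1 = s t + d *: v t by rewrite /s traj_succ.
  have step : F (y t) - F (y t.+1) <=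
      c * (F (s t.+1) - F (s t)) + (c + 1) * (taylor_const h * d ^+ 2).
    rewrite ySe sSe; apply: progress_step => //.
    - exact: sP.
    - by rewrite -sSe; apply: sP.
    - exact: yP.
    - by rewrite -ySe; apply: yP.
    - by move=> i j; apply: le_sy.
  by have := IH tN; rewrite -natr1; lra.
have := potential N (leqnn N).
have -> : y N = s N by rewrite /y /d mulfV ?pnatr_eq0 -?lt0n // subrr scale0r addr0.
have F0 : 0 <= c * F (s 0%N) by rewrite mulr_ge0 // msum_ge0 //; apply: sP.
have -> : N%:R * (taylor_const h * d ^+ 2) = taylor_const h * d.
  by rewrite /d expr2; field; rewrite pnatr_eq0 -lt0n.
rewrite /F /s mulrBr !mulrDl !mul1r in F0 *; lra.
Qed.

(* The value of the best full assignment is OPT: by monotonicity any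
   maximiser can be completed by assigning its free elements anywhere. *)
Lemma OPT_full_assignment h : (0 < k)%N -> (forall S, 0 <= h S) -> kmonotone h ->
  exists J : 'I_n -> 'I_k, OPT h <= h [ffun i => Some (J i)].
Proof.
move=> k0 h0 hmono; pose j0 : 'I_k := Ordinal k0.
have [S0 _ S0max] := @arg_maxP _ R (kset n k) [ffun=> None] xpredT h isT.
have opt_S0 : OPT h <= h S0.
  rewrite /OPT; apply: (big_ind (fun z => z <= h S0)) => // a b ha hb.
  by rewrite ge_max ha hb.
exists (fun i => if S0 i is Some j then j else j0); apply: le_trans opt_S0 _.
apply: hmono => j; apply/fintype.subsetP => r; rewrite !inE ffunE.
by case: (S0 r).
Qed.

End MultilinearExtension.

Lemma discretisation_small (R : archiRealFieldType) (K eps : R) (N : nat) :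
  0 < eps -> (Num.truncn (K / eps) < N)%N -> K / N%:R <= eps.
Proof.
move=> eps0 lt_N; have N0 : (0 : R) < N%:R by rewrite ltr0n (leq_ltn_trans _ lt_N).
have : K / eps < N%:R by apply: lt_le_trans (truncnS_gt _) _; rewrite ler_nat.
by rewrite ltr_pdivrMr // ler_pdivrMr // mulrC => /ltW.
Qed.

Theorem mainTheorem5 (R : realType) (n k : nat) (f : kset n k -> R) (c : R) :
  (2 <= k)%N ->
  (forall S, 0 <= f S) ->
  kmonotone f ->
  ksubmodular f ->
  0 < c ->
  forall eps : R, 0 < eps ->
  exists N0 : nat, forall N : nat, (N0 <= N)%N -> (0 < N)%N ->
  forall v : nat -> 'M[R]_(n, k),
    (forall t, (t < N)%N ->
       direction (v t) /\
       good_direction c (gradient (multilinear_ext f) (traj N v t)) (v t)) ->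
    (c + 1)^-1 * OPT f - eps <= multilinear_ext f (traj N v N).
Proof.
move=> k2 f0 fmono fsub c0 eps eps0.
have [J optJ] := OPT_full_assignment _ _ _ f (ltnW k2) f0 fmono.
pose K := taylor_const _ _ _ f.
exists (Num.truncn (K / eps)).+1 => N le_N N0 v vgood.
have := comparison_bound _ _ _ f c N v J fmono fsub f0 (ltW c0) N0 vgood.
rewrite multilinear_ext_indicator -mulrDr => bound.
have K_N : K / N%:R <= eps by apply: discretisation_small.
have c1 : 0 < c + 1 by rewrite ltr_pwDl.
have : (c + 1)^-1 * OPT f <= multilinear_ext f (traj N v N) + K / N%:R.
  by rewrite mulrC ler_pdivrMr // mulrC (le_trans optJ).
lra.
Qed.
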